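(* Let $d=4k+1$ with $k\ge3$. Consider the families (all indices read modulo $d$) $C^0=\{L^0_{1+i,2k+i}\}_{i=0}^{k}\cup\{L^0_{k+i,k+i}\}_{i=2}^{k-1}\cup\{L^0_{2k+i,1+i}\}_{i=0}^{k}\cup\{L^0_{3k+i,3k+i}\}_{i=1}^{k+1}$, $C^1=\{L^1_{2k+1,2k+i}\}_{i=1}^{k-1}\cup\{L^1_{3k+1,2k}\}\cup\{L^1_{1,k+i}\}_{i=0}^{k-1}\cup\{L^1_{2k+1,i}\}_{i=0}^{k-1}\cup\{L^1_{3k+2,4k}\}\cup\{L^1_{2,3k+i}\}_{i=0}^{k-1}$, $C^2=\{L^2_{1,i}\}_{i=0}^{k-1}\cup\{L^2_{2k+2,3k+i}\}_{i=0}^{k}\cup\{L^2_{2,2k+i}\}_{i=0}^{k-1}\cup\{L^2_{2k+2,k+i}\}_{i=0}^{k-1}$. Then $C^0\cup C^1\cup C^2$ consists of $3d$ pairwise disjoint lines on ${\rm F}_d$.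
   Context: ${\rm F}_d\subset\mathbb{P}^3(\mathbb{C})$ is the surface $x^d-y^d-z^d+w^d=0$ ($d$ odd). Fix a primitive $d$-th root of unity $\eta$ and put $v=-1$. For integers $k,i$ (taken modulo $d$) define the lines $L^0_{k,i}:\{y=\eta^i x,\ w=\eta^k z\}$, $L^1_{k,i}:\{x=\eta^{k+i}z,\ y=\eta^i w\}$, $L^2_{k,i}:\{x=v\eta^i w,\ y=v\eta^{k+i}z\}$, all lying on ${\rm F}_d$. *)

From mathcomp Require Import all_boot all_algebra all_field.
Set Implicit Arguments. Unset Strict Implicit. Unset Printing Implicit Defensive.
Import GRing.Theory Num.Theory.
Local Open Scope ring_scope.

(* Lines on the surface F_d : x^d - y^d - z^d + w^d = 0 in P^3(C), C = algC.
   Indices are natural numbers; since eta^d = 1, eta ^+ n depends only on n mod d. *)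
Inductive fline := L0 of nat & nat | L1 of nat & nat | L2 of nat & nat.

Definition vsign : algC := -1.

Definition on_line (eta : algC) (l : fline) (x y z w : algC) : Prop :=
  match l with
  | L0 k i => y = eta ^+ i * x /\ w = eta ^+ k * z
  | L1 k i => x = eta ^+ (k + i) * z /\ y = eta ^+ i * w
  | L2 k i => x = vsign * eta ^+ i * w /\ y = vsign * eta ^+ (k + i) * z
  end.

Definition nonzero4 (x y z w : algC) : Prop := ~ (x = 0 /\ y = 0 /\ z = 0 /\ w = 0).

Definition line_on_Fd (d : nat) (eta : algC) (l : fline) : Prop :=
  forall x y z w : algC, on_line eta l x y z w ->
    x ^+ d - y ^+ d - z ^+ d + w ^+ d = 0.

Definition lines_disjoint (eta : algC) (l1 l2 : fline) : Prop :=
  forall x y z w : algC, nonzero4 x y z w ->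
    on_line eta l1 x y z w -> on_line eta l2 x y z w -> False.

Definition C0 (k : nat) : seq fline :=
  [seq L0 (1 + i) (2 * k + i) | i <- iota 0 (k + 1)] ++
  [seq L0 (k + i) (k + i) | i <- iota 2 (k - 2)] ++
  [seq L0 (2 * k + i) (1 + i) | i <- iota 0 (k + 1)] ++
  [seq L0 (3 * k + i) (3 * k + i) | i <- iota 1 (k + 1)].

Definition C1 (k : nat) : seq fline :=
  [seq L1 (2 * k + 1) (2 * k + i) | i <- iota 1 (k - 1)] ++
  [:: L1 (3 * k + 1) (2 * k)] ++
  [seq L1 1 (k + i) | i <- iota 0 k] ++
  [seq L1 (2 * k + 1) i | i <- iota 0 k] ++
  [:: L1 (3 * k + 2) (4 * k)] ++
  [seq L1 2 (3 * k + i) | i <- iota 0 k].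

Definition C2 (k : nat) : seq fline :=
  [seq L2 1 i | i <- iota 0 k] ++
  [seq L2 (2 * k + 2) (3 * k + i) | i <- iota 0 (k + 1)] ++
  [seq L2 2 (2 * k + i) | i <- iota 0 k] ++
  [seq L2 (2 * k + 2) (k + i) | i <- iota 0 k].

From mathcomp Require Import all_boot all_algebra all_field.
From mathcomp Require Import zify ring.
Set Implicit Arguments. Unset Strict Implicit. Unset Printing Implicit Defensive.
Import GRing.Theory Num.Theory.

(* Since eta is a primitive d-th root of unity, eta ^+ a = eta ^+ b exactly when
   a = b (mod d). Eliminating coordinates between the equations of two lines shows
   that they can only meet when one of at most two congruences between their indices
   holds. For the listed lines both sides of each congruence are below 4d, so it
   would force them to differ by 0, d, 2d or 3d, which linear arithmetic in k
   excludes. Each line lies on F_d because (eta ^+ i) ^+ d = 1 and (-1) ^+ d = -1. *)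

Lemma neq_modn_lt4 (d a b : nat) : a < 4 * d -> b < 4 * d ->
  ~ (a = b \/ a = b + d \/ a = b + 2 * d \/ a = b + 3 * d \/
     b = a + d \/ b = a + 2 * d \/ b = a + 3 * d) ->
  a %% d != b %% d.
Proof.
move=> lt_a lt_b neq; apply/eqP => eq_ab; apply: neq.
rewrite (divn_eq a d) (divn_eq b d) eq_ab.
have : a %/ d < 4 by rewrite ltn_divLR; lia.
have : b %/ d < 4 by rewrite ltn_divLR; lia.
case: (a %/ d) => [|[|[|[|]]]] //; case: (b %/ d) => [|[|[|[|]]]] // _ _; lia.
Qed.

Lemma pairwise_iota (r : rel nat) (m n : nat) :
  (forall i j, m <= i -> i < j -> j < m + n -> r i j) -> pairwise r (iota m n).
Proof.
elim: n m => [//|n IH] m r_mn /=; apply/andP; split.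
  by apply/allP => j; rewrite mem_iota => /andP[? ?]; apply: r_mn; lia.
by apply: IH => i j *; apply: r_mn; lia.
Qed.

Local Open Scope ring_scope.

Lemma line_on_Fd_odd (d : nat) (eta : algC) (l : fline) :
  odd d -> eta ^+ d = 1 -> line_on_Fd d eta l.
Proof.
move=> odd_d eta_d x y z w.
have etaX_d i : (eta ^+ i) ^+ d = 1 by rewrite exprAC eta_d expr1n.
have vsign_d : vsign ^+ d = -1 by rewrite /vsign -signr_odd odd_d.
by case: l => k i /= [-> ->]; rewrite !exprMn !etaX_d ?vsign_d; ring.
Qed.

Lemma eq0_of_eq_mul (R : idomainType) (a b x : R) : a != b -> a * x = b * x -> x = 0.
Proof.
move=> neq_ab /eqP; rewrite -subr_eq0 -mulrBl mulf_eq0 subr_eq0 (negbTE neq_ab).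
by move/eqP.
Qed.

Section Disjointness.
Variable eta : algC.

Let vsign_neq0 : vsign != 0. Proof. by rewrite oppr_eq0 oner_eq0. Qed.

Lemma disjoint_L0_L0 k i k' i' : eta ^+ i != eta ^+ i' -> eta ^+ k != eta ^+ k' ->
  lines_disjoint eta (L0 k i) (L0 k' i').
Proof.
move=> neq_i neq_k x y z w nz [yx wz] [yx' wz'].
have x0 : x = 0 by apply: (eq0_of_eq_mul neq_i); rewrite -yx.
have z0 : z = 0 by apply: (eq0_of_eq_mul neq_k); rewrite -wz.
by apply: nz; rewrite yx wz x0 z0 !mulr0.
Qed.

Lemma disjoint_L0_L1 k i k' i' : eta ^+ (i + (k' + i')) != eta ^+ (i' + k) ->
  lines_disjoint eta (L0 k i) (L1 k' i').
Proof.
move=> neq x y z w nz [yx wz] [xz yw].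
have z0 : z = 0.
  apply: (eq0_of_eq_mul neq); transitivity y.
    by rewrite yx xz !exprD; ring.
  by rewrite yw wz exprD; ring.
by apply: nz; rewrite yw wz xz z0 !mulr0.
Qed.

Lemma disjoint_L0_L2 k i k' i' : eta ^+ (i + (i' + k)) != eta ^+ (k' + i') ->
  lines_disjoint eta (L0 k i) (L2 k' i').
Proof.
move=> neq x y z w nz [yx wz] [xw yz].
have z0 : z = 0.
  apply: (eq0_of_eq_mul neq); apply: (mulfI vsign_neq0); transitivity y.
    by rewrite yx xw wz !exprD; ring.
  by rewrite yz; ring.
by apply: nz; rewrite xw yz wz z0 !mulr0.
Qed.

Lemma disjoint_L1_L1 k i k' i' : eta ^+ (k + i) != eta ^+ (k' + i') -> eta ^+ i != eta ^+ i' ->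
  lines_disjoint eta (L1 k i) (L1 k' i').
Proof.
move=> neq_ki neq_i x y z w nz [xz yw] [xz' yw'].
have z0 : z = 0 by apply: (eq0_of_eq_mul neq_ki); rewrite -xz.
have w0 : w = 0 by apply: (eq0_of_eq_mul neq_i); rewrite -yw.
by apply: nz; rewrite xz yw z0 w0 !mulr0.
Qed.

Lemma disjoint_L1_L2 k i k' i' : eta != 0 ->
  eta ^+ (i + (k + i)) != eta ^+ (i' + (k' + i')) ->
  lines_disjoint eta (L1 k i) (L2 k' i').
Proof.
move=> eta_neq0 neq x y z w nz [xz yw] [xw yz].
have z0 : z = 0.
  have : eta ^+ i * x = vsign * eta ^+ i' * y by rewrite xw yw; ring.
  rewrite xz yz /vsign => e; apply: (eq0_of_eq_mul neq).
  by rewrite [eta ^+ (i + _)]exprD [eta ^+ (i' + _)]exprD -mulrA e; ring.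
have w0 : w = 0.
  have /eqP : eta ^+ i * w = 0 by rewrite -yw yz z0 mulr0.
  by rewrite mulf_eq0 expf_eq0 (negbTE eta_neq0) andbF => /eqP.
by apply: nz; rewrite xz yw z0 w0 !mulr0.
Qed.

Lemma disjoint_L2_L2 k i k' i' : eta ^+ i != eta ^+ i' -> eta ^+ (k + i) != eta ^+ (k' + i') ->
  lines_disjoint eta (L2 k i) (L2 k' i').
Proof.
move=> neq_i neq_ki x y z w nz [xw yz] [xw' yz'].
have w0 : w = 0.
  by apply: (eq0_of_eq_mul neq_i); apply: (mulfI vsign_neq0); rewrite !mulrA -xw.
have z0 : z = 0.
  by apply: (eq0_of_eq_mul neq_ki); apply: (mulfI vsign_neq0); rewrite !mulrA -yz.
by apply: nz; rewrite xw yz z0 w0 !mulr0.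
Qed.

End Disjointness.

(* Only pairs whose families come in the order L0, L1, L2 are covered: this is
   the order in which [C0 k ++ C1 k ++ C2 k] lists them. *)
Definition separated (d : nat) (a b : fline) : bool :=
  match a, b with
  | L0 k i, L0 k' i' => (i != i' %[mod d]) && (k != k' %[mod d])
  | L0 k i, L1 k' i' => i + (k' + i') != i' + k %[mod d]
  | L0 k i, L2 k' i' => i + (i' + k) != k' + i' %[mod d]
  | L1 k i, L1 k' i' => (k + i != k' + i' %[mod d]) && (i != i' %[mod d])
  | L1 k i, L2 k' i' => i + (k + i) != i' + (k' + i') %[mod d]
  | L2 k i, L2 k' i' => (i != i' %[mod d]) && (k + i != k' + i' %[mod d])
  | _, _ => false
  end%N.

Lemma separated_disjoint (d : nat) (eta : algC) (a b : fline) :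
  d.-primitive_root eta -> separated d a b -> lines_disjoint eta a b.
Proof.
move=> prim; have eta_neq0 : eta != 0 by rewrite (prim_root_eq0 prim) -lt0n (prim_order_gt0 prim).
case: a b => k i [] k' i' //=; rewrite -!(eq_prim_root_expr prim).
- by case/andP; apply: disjoint_L0_L0.
- exact: disjoint_L0_L1.
- exact: disjoint_L0_L2.
- by case/andP; apply: disjoint_L1_L1.
- exact: disjoint_L1_L2.
- by case/andP; apply: disjoint_L2_L2.
Qed.

Ltac separate_by_residues :=
  rewrite /C0 /C1 /C2 ?pairwise_cat ?allrel_catl ?allrel_catr ?allrel_mapl ?allrel_mapr
    ?pairwise_map ?allrel1l ?allrel1r ?all_map /=;
  repeat (apply/andP; split); try done;
  lazymatch goal with
  | |- is_true (allrel _ _ _) =>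
      apply/allrelP => ? ?; rewrite !mem_iota => /andP[? ?] /andP[? ?]
  | |- is_true (all _ _) => apply/allP => ?; rewrite mem_iota => /andP[? ?]
  | |- is_true (pairwise _ _) => apply: pairwise_iota => ? ? ? ? ?
  | _ => idtac
  end;
  rewrite /=; repeat (apply/andP; split); apply: neq_modn_lt4; lia.

Section Families.
Variable k : nat.
Hypothesis k_ge3 : (3 <= k)%N.
Let d := (4 * k + 1)%N.

Lemma pairwise_separated_C0 : pairwise (separated d) (C0 k).
Proof. by separate_by_residues. Qed.

Lemma pairwise_separated_C1 : pairwise (separated d) (C1 k).
Proof. by separate_by_residues. Qed.

Lemma pairwise_separated_C2 : pairwise (separated d) (C2 k).
Proof. by separate_by_residues. Qed.

Lemma allrel_separated_C0_C1 : allrel (separated d) (C0 k) (C1 k).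
Proof. by separate_by_residues. Qed.

Lemma allrel_separated_C0_C2 : allrel (separated d) (C0 k) (C2 k).
Proof. by separate_by_residues. Qed.

Lemma allrel_separated_C1_C2 : allrel (separated d) (C1 k) (C2 k).
Proof. by separate_by_residues. Qed.

Lemma pairwise_separated_C : pairwise (separated d) (C0 k ++ C1 k ++ C2 k).
Proof.
rewrite pairwise_cat [pairwise _ (C1 k ++ _)]pairwise_cat allrel_catr.
by rewrite pairwise_separated_C0 pairwise_separated_C1 pairwise_separated_C2
  allrel_separated_C0_C1 allrel_separated_C0_C2 allrel_separated_C1_C2.
Qed.

End Families.

Theorem proposition4p4 (k : nat) (hk : (3 <= k)%N) (eta : algC)
  (heta : (4 * k + 1)%N.-primitive_root eta) :
  let C := C0 k ++ C1 k ++ C2 k in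
  size C = (3 * (4 * k + 1))%N /\
  (forall i : nat, (i < size C)%N -> line_on_Fd (4 * k + 1) eta (nth (L0 0 0) C i)) /\
  (forall i j : nat, (i < j)%N -> (j < size C)%N ->
     lines_disjoint eta (nth (L0 0 0) C i) (nth (L0 0 0) C j)).
Proof.
move=> C; split; last split.
- by rewrite /C /C0 /C1 /C2 !size_cat !size_map !size_iota /=; lia.
- by move=> i _; apply: line_on_Fd_odd; [rewrite addn1 /= oddM | exact: prim_expr_order heta].
- move=> i j lt_ij lt_jC; apply: (separated_disjoint heta).
  have /(pairwiseP (L0 0 0)) sepC := pairwise_separated_C hk.
  exact: sepC (ltn_trans lt_ij lt_jC) lt_jC lt_ij.
Qed.
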